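(* Let $(C,n)$ be a finite-dimensional composition algebra over a field $k$ of characteristic not $2$, with underlying vector space $V$. Then there exist a symmetric composition algebra $S$ with the same underlying quadratic space $(V,n)$ and isometries $f,g\in\mathrm{O}(n)$ such that $C=S_{f,g}$.
   Context: An algebra over $k$ is a $k$-vector space with a bilinear multiplication (not necessarily associative, commutative or unital). For a quadratic form $n$ on $V$, $b_n(x,y)=n(x+y)-n(x)-n(y)$ is its polar bilinear form, and $n$ is non-degenerate if $b_n$ has trivial radical. A composition algebra over $k$ is an algebra $C$ endowed with a non-degenerate quadratic form $n$ such that $n(xy)=n(x)n(y)$ for all $x,y\in C$. It is symmetric if $b_n(xy,z)=b_n(x,yz)$ for all $x,y,z$. $\mathrm{O}(n)$ is the group of linear isometries of $(V,n)$. For an algebra $A$ and linear maps $f,g$ on $A$, the isotope $A_{f,g}$ is the algebra with underlying space $A$ and multiplication $x\cdot y=f(x)g(y)$, where juxtaposition is the multiplication of $A$. *)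

From HB Require Import structures.
From mathcomp Require Import all_boot all_order all_algebra.
Set Implicit Arguments. Unset Strict Implicit. Unset Printing Implicit Defensive.
Import GRing.Theory.
Local Open Scope ring_scope.

Section Defs.
Variables (K : fieldType) (V : vectType K).

Definition polar (q : V -> K) (x y : V) : K := q (x + y) - q x - q y.

Definition bilinear_mul (m : V -> V -> V) : Prop :=
  (forall x, linear (m x)) /\ (forall y, linear (fun x => m x y)).

Definition quadratic_form (q : V -> K) : Prop :=
  (forall (a : K) x, q (a *: x) = a ^+ 2 * q x) /\
  (forall x, linear (polar q x : V -> K^o)) /\
  (forall y, linear ((fun x => polar q x y) : V -> K^o)).

Definition nondegenerate (q : V -> K) : Prop :=
  forall x, (forall y, polar q x y = 0) -> x = 0.

Definition composition_algebra (m : V -> V -> V) (q : V -> K) : Prop :=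
  [/\ bilinear_mul m, quadratic_form q, nondegenerate q &
      forall x y, q (m x y) = q x * q y].

Definition symmetric_composition_algebra (m : V -> V -> V) (q : V -> K) : Prop :=
  composition_algebra m q /\
  forall x y z, polar q (m x y) z = polar q x (m y z).

Definition in_orthogonal_group (q : V -> K) (f : V -> V) : Prop :=
  [/\ linear f, bijective f & forall x, q (f x) = q x].

Definition isotope (m : V -> V -> V) (f g : V -> V) : V -> V -> V :=
  fun x y => m (f x) (g y).

End Defs.

From Pilot Require Import Defs.
From HB Require Import structures.
From mathcomp Require Import all_boot all_order all_algebra.
From mathcomp Require Import ring.
From Stdlib Require Import FunctionalExtensionality Classical.
Set Implicit Arguments. Unset Strict Implicit. Unset Printing Implicit Defensive.
Import GRing.Theory.
Local Open Scope ring_scope.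

(** Kaplansky's trick. Pick [a] with [n(a) = 1]; right and left multiplication
    by [a] are isometries, and [x * y := R_a^-1(x) L_a^-1(y)] is a unital
    composition algebra (a Hurwitz algebra) with identity [e = a a].  Its
    standard involution [x |-> b_n(x,e) e - x] is an isometry, and the
    para-Hurwitz product [s(x,y) := conj(x) * conj(y)] is a symmetric
    composition algebra.  Since [conj] is involutive, the original product is
    [x y = s(conj(x a), conj(a y))]. *)

Section LinearPredicate.
Variables (K : fieldType) (U W : lmodType K) (f : U -> W).
Hypothesis f_linear : linear f.
Let lf : {linear U -> W} := HB.pack f (GRing.isLinear.Build K U W *:%R f f_linear).

Lemma lin0 : f 0 = 0. Proof. exact: (linear0 lf). Qed.
Lemma linD u v : f (u + v) = f u + f v. Proof. exact: (linearD lf). Qed.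
Lemma linN u : f (- u) = - f u. Proof. exact: (linearN lf). Qed.
Lemma linB u v : f (u - v) = f u - f v. Proof. exact: (linearB lf). Qed.
Lemma linZ a u : f (a *: u) = a *: f u.
Proof. by have := f_linear a u 0; rewrite !addr0 lin0 addr0. Qed.

End LinearPredicate.

Lemma linear_comp (K : fieldType) (U V W : lmodType K) (f : V -> W) (g : U -> V) :
  linear f -> linear g -> linear (fun x => f (g x)).
Proof. by move=> f_lin g_lin a u v; rewrite g_lin f_lin. Qed.

Lemma linear_inj_inverse (K : fieldType) (V : vectType K) (f : V -> V) :
  linear f -> injective f ->
  exists g : V -> V, [/\ cancel f g, cancel g f & linear g].
Proof.
move=> f_lin f_inj.
pose lf : {linear V -> V} := HB.pack f (GRing.isLinear.Build K V V *:%R f f_lin).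
pose F : 'End(V) := linfun lf.
have kerF0 : lker F == 0%VS by apply/lker0P => x y; rewrite !lfunE; apply: f_inj.
exists (F^-1%VF); split=> [x | x | a x y]; last by rewrite linearP.
- by have := lker0_lfunK kerF0 x; rewrite lfunE.
- by have := lker0_lfunVK kerF0 x; rewrite lfunE.
Qed.

Section QuadraticForm.
Variables (K : fieldType) (V : vectType K) (q : V -> K).
Hypothesis q_quad : quadratic_form q.
Local Notation b := (polar q).

Lemma polar_linear x : linear (b x : V -> K^o). Proof. by case: q_quad => _ []. Qed.
Lemma polar_linear_l y : linear ((fun x => b x y) : V -> K^o).
Proof. by case: q_quad => _ []. Qed.

Lemma polarC x y : b x y = b y x. Proof. by rewrite /polar [y + x]addrC; ring. Qed.
Lemma quadD x y : q (x + y) = q x + q y + b x y. Proof. by rewrite /polar; ring. Qed.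
Lemma quadZ a x : q (a *: x) = a ^+ 2 * q x. Proof. by case: q_quad. Qed.
Lemma quadN x : q (- x) = q x.
Proof. by rewrite -scaleN1r quadZ expr2 mulN1r opprK mul1r. Qed.
Lemma polarxx x : b x x = 2%:R * q x.
Proof. by rewrite /polar -mulr2n -scaler_nat quadZ; ring. Qed.

Lemma polarZr a x y : b x (a *: y) = a * b x y.
Proof. exact: (linZ (polar_linear x)). Qed.
Lemma polarZl a x y : b (a *: x) y = a * b x y.
Proof. exact: (linZ (polar_linear_l y)). Qed.
Lemma polarDr x y z : b x (y + z) = b x y + b x z. Proof. exact: (linD (polar_linear x)). Qed.
Lemma polarDl x y z : b (x + y) z = b x z + b y z. Proof. exact: (linD (polar_linear_l z)). Qed.
Lemma polarNr x y : b x (- y) = - b x y. Proof. exact: (linN (polar_linear x)). Qed.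
Lemma polarBr x y z : b x (y - z) = b x y - b x z. Proof. exact: (linB (polar_linear x)). Qed.
Lemma polarBl x y z : b (x - y) z = b x z - b y z. Proof. exact: (linB (polar_linear_l z)). Qed.
Lemma polar0l y : b 0 y = 0. Proof. exact: (lin0 (polar_linear_l y)). Qed.

End QuadraticForm.

Section CompositionIdentities.
Variables (K : fieldType) (V : vectType K) (q : V -> K) (m : V -> V -> V).
Hypotheses (q_quad : quadratic_form q) (m_bilin : bilinear_mul m).
Hypothesis quad_mul : forall x y, q (m x y) = q x * q y.
Local Notation b := (polar q).

Lemma mul_linear x : linear (m x). Proof. by case: m_bilin. Qed.
Lemma mul_linear_l y : linear (fun x => m x y). Proof. by case: m_bilin. Qed.

Lemma polar_mulr x1 x2 y : b (m x1 y) (m x2 y) = b x1 x2 * q y.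
Proof.
have := quad_mul (x1 + x2) y.
by rewrite (linD (mul_linear_l y)) !quadD // !quad_mul !mulrDl => h; exact: (addrI _ h).
Qed.

Lemma polar_mull x y1 y2 : b (m x y1) (m x y2) = q x * b y1 y2.
Proof.
have := quad_mul x (y1 + y2).
by rewrite (linD (mul_linear x)) !quadD // !quad_mul !mulrDr => h; exact: (addrI _ h).
Qed.

(* Linearising [polar_mulr] in [y]. *)
Lemma polar_mul_exchange x1 x2 y1 y2 :
  b (m x1 y1) (m x2 y2) + b (m x1 y2) (m x2 y1) = b x1 x2 * b y1 y2.
Proof.
have := polar_mulr x1 x2 (y1 + y2).
rewrite (linD (mul_linear x1)) (linD (mul_linear x2)) !polarDl // !polarDr //.
rewrite !polar_mulr quadD // mulrDr [_ * (q y1 + _)]mulrDr => h.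
apply: (addrI (b x1 x2 * q y1 + b x1 x2 * q y2)); by rewrite -h; ring.
Qed.

Hypothesis q_nondeg : Defs.nondegenerate q.

Lemma mul_inj c : q c != 0 -> injective (m c).
Proof.
move=> qc0 u v muv; apply/eqP; rewrite -subr_eq0; apply/eqP; apply: q_nondeg => z.
have := polar_mull c (u - v) z.
rewrite (linB (mul_linear c)) muv subrr polar0l // => /esym/eqP.
by rewrite mulf_eq0 (negPf qc0) => /eqP.
Qed.

Lemma mul_inj_l c : q c != 0 -> injective (fun x => m x c).
Proof.
move=> qc0 u v muv; apply/eqP; rewrite -subr_eq0; apply/eqP; apply: q_nondeg => z.
have := polar_mulr (u - v) z c.
rewrite (linB (mul_linear_l c)) /= muv subrr polar0l // => /esym/eqP.
by rewrite mulf_eq0 (negPf qc0) orbF => /eqP.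
Qed.

Lemma exists_unit_norm x0 : q x0 != 0 -> exists a, q a = 1.
Proof.
move=> qx0; have [g [_ gK _]] := linear_inj_inverse (mul_linear x0) (mul_inj qx0).
by exists (g x0); apply: (mulfI qx0); rewrite -quad_mul gK mulr1.
Qed.

End CompositionIdentities.

Section UnitalIsotope.
Variables (K : fieldType) (V : vectType K) (q : V -> K) (m : V -> V -> V).
Hypotheses (q_quad : quadratic_form q) (m_bilin : bilinear_mul m).
Hypothesis quad_mul : forall x y, q (m x y) = q x * q y.
Local Notation b := (polar q).
Variables (a : V) (Ri Li : V -> V).
Hypothesis quad_a : q a = 1.
Hypotheses (mulaK : cancel (fun x => m x a) Ri) (RiK : cancel Ri (fun x => m x a)).
Hypotheses (mulaKl : cancel (m a) Li) (LiK : cancel Li (m a)).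
Hypotheses (Ri_linear : linear Ri) (Li_linear : linear Li).

Definition hmul x y := m (Ri x) (Li y).
Definition hone := m a a.
Definition hconj x := b x hone *: hone - x.
Definition pmul x y := hmul (hconj x) (hconj y).

Lemma quad_Ri x : q (Ri x) = q x.
Proof. by rewrite -{2}(RiK x) quad_mul quad_a mulr1. Qed.

Lemma quad_Li x : q (Li x) = q x.
Proof. by rewrite -{2}(LiK x) quad_mul quad_a mul1r. Qed.

Lemma quad_hmul x y : q (hmul x y) = q x * q y.
Proof. by rewrite /hmul quad_mul quad_Ri quad_Li. Qed.

Lemma hmul_bilinear : bilinear_mul hmul.
Proof.
split=> [x | y]; first exact: (linear_comp (mul_linear m_bilin (Ri x)) Li_linear).
exact: (linear_comp (mul_linear_l m_bilin (Li y)) Ri_linear).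
Qed.

Lemma hmul1l y : hmul hone y = y. Proof. by rewrite /hmul /hone mulaK LiK. Qed.
Lemma hmulr1 x : hmul x hone = x. Proof. by rewrite /hmul /hone mulaKl RiK. Qed.

Lemma polar_hone : b hone hone = 2%:R.
Proof. by rewrite polarxx // /hone quad_mul quad_a !mulr1. Qed.

Lemma polar_hmul_swapr x y z : b (hmul x y) z + b (hmul x z) y = b x hone * b y z.
Proof.
have := polar_mul_exchange q_quad hmul_bilinear quad_hmul x hone y z.
by rewrite !hmul1l.
Qed.

Lemma polar_hmul_swapl x y z : b (hmul x y) z + b x (hmul z y) = b y hone * b x z.
Proof.
have := polar_mul_exchange q_quad hmul_bilinear quad_hmul x z y hone.
by rewrite !hmulr1 mulrC.
Qed.

Lemma hconj_linear : linear hconj.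
Proof.
move=> c u v; rewrite /hconj (polar_linear_l q_quad hone c u v).
by rewrite scalerDl -scalerA scalerBr opprD addrACA.
Qed.

Lemma polar_hconj_hone x : b (hconj x) hone = b x hone.
Proof. by rewrite /hconj polarBl // polarZl // polar_hone; ring. Qed.

Lemma hconjK : involutive hconj.
Proof. by move=> x; rewrite {1}/hconj polar_hconj_hone /hconj opprB addrC subrK. Qed.

Lemma quad_hconj x : q (hconj x) = q x.
Proof.
rewrite /hconj quadD // quadZ // quadN // polarNr // polarZl // polarC //.
by rewrite /hone quad_mul quad_a mulr1; ring.
Qed.

Lemma polar_hmul_adjl x y z : b (hmul x y) z = b y (hmul (hconj x) z).
Proof.
rewrite /hconj (linB (mul_linear_l hmul_bilinear z)) (linZ (mul_linear_l hmul_bilinear z)).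
rewrite hmul1l polarBr // polarZr // -polar_hmul_swapr [b (hmul x z) y]polarC //; ring.
Qed.

Lemma polar_hmul_adjr x y z : b (hmul x y) z = b x (hmul z (hconj y)).
Proof.
rewrite /hconj (linB (mul_linear hmul_bilinear z)) (linZ (mul_linear hmul_bilinear z)).
by rewrite hmulr1 polarBr // polarZr // -polar_hmul_swapl; ring.
Qed.

Lemma polar_pmulA x y z : b (pmul x y) z = b x (pmul y z).
Proof. by rewrite /pmul polar_hmul_adjl hconjK [RHS]polarC // polar_hmul_adjr hconjK. Qed.

Lemma pmul_symmetric : Defs.nondegenerate q -> symmetric_composition_algebra pmul q.
Proof.
move=> q_nondeg; split; last exact: polar_pmulA.
split=> // [|x y]; last by rewrite /pmul quad_hmul !quad_hconj.
split=> [x | y].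
- exact: (linear_comp (mul_linear hmul_bilinear (hconj x)) hconj_linear).
- exact: (linear_comp (mul_linear_l hmul_bilinear (hconj y)) hconj_linear).
Qed.

Lemma hconj_mul_orthogonal_l : in_orthogonal_group q (fun x => hconj (m x a)).
Proof.
split; first exact: (linear_comp hconj_linear (mul_linear_l m_bilin a)).
- by exists (fun x => Ri (hconj x)) => x /=; rewrite ?RiK hconjK ?mulaK.
- by move=> x; rewrite quad_hconj quad_mul quad_a mulr1.
Qed.

Lemma hconj_mul_orthogonal : in_orthogonal_group q (fun y => hconj (m a y)).
Proof.
split; first exact: (linear_comp hconj_linear (mul_linear m_bilin a)).
- by exists (fun x => Li (hconj x)) => x /=; rewrite ?LiK hconjK ?mulaKl.
- by move=> x; rewrite quad_hconj quad_mul quad_a mul1r.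
Qed.

Lemma mul_isotope_pmul :
  m = isotope pmul (fun x => hconj (m x a)) (fun y => hconj (m a y)).
Proof.
apply: functional_extensionality => x; apply: functional_extensionality => y.
by rewrite /isotope /pmul /hmul !hconjK mulaK mulaKl.
Qed.

End UnitalIsotope.

Lemma composition_isotope_of_unit_norm (K : fieldType) (V : vectType K)
    (m : V -> V -> V) (q : V -> K) (a : V) :
  composition_algebra m q -> q a = 1 ->
  exists (s : V -> V -> V) (f g : V -> V),
    [/\ symmetric_composition_algebra s q,
        in_orthogonal_group q f, in_orthogonal_group q g &
        m = isotope s f g].
Proof.
move=> [m_bilin q_quad q_nondeg quad_mul] quad_a.
have qa0 : q a != 0 by rewrite quad_a oner_neq0.
have [Li [mulaKl LiK Li_lin]] :=
  linear_inj_inverse (mul_linear m_bilin a) (mul_inj q_quad m_bilin quad_mul q_nondeg qa0).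
have [Ri [mulaK RiK Ri_lin]] :=
  linear_inj_inverse (mul_linear_l m_bilin a) (mul_inj_l q_quad m_bilin quad_mul q_nondeg qa0).
exists (pmul q m a Ri Li), (fun x => hconj q m a (m x a)), (fun y => hconj q m a (m a y)).
split.
- exact: pmul_symmetric.
- exact: hconj_mul_orthogonal_l.
- exact: hconj_mul_orthogonal.
- exact: mul_isotope_pmul.
Qed.

Lemma isotropic_composition_symmetric (K : fieldType) (V : vectType K)
    (m : V -> V -> V) (q : V -> K) :
  (forall x, q x = 0) -> composition_algebra m q -> symmetric_composition_algebra m q.
Proof. by move=> q0 m_comp; split=> // x y z; rewrite /polar !q0 !subrr. Qed.

Lemma id_orthogonal (K : fieldType) (V : vectType K) (q : V -> K) :
  in_orthogonal_group q id.
Proof. by split=> //; exists id. Qed.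

Theorem mainTheorem1 (K : fieldType) (V : vectType K)
  (m : V -> V -> V) (q : V -> K) :
  (2%:R : K) != 0 ->
  composition_algebra m q ->
  exists (s : V -> V -> V) (f g : V -> V),
    [/\ symmetric_composition_algebra s q,
        in_orthogonal_group q f, in_orthogonal_group q g &
        m = isotope s f g].
Proof.
move=> _ m_comp; have [m_bilin q_quad q_nondeg quad_mul] := m_comp.
case: (classic (exists x, q x != 0)) => [[x0 qx0] | q_isotropic].
- have [a quad_a] := exists_unit_norm q_quad m_bilin quad_mul q_nondeg qx0.
  exact: composition_isotope_of_unit_norm quad_a.
- have q0 x : q x = 0 by apply/eqP/negPn/negP => qx0; apply: q_isotropic; exists x.
  exists m, id, id; split; [| exact: id_orthogonal | exact: id_orthogonal | by []].
  exact: isotropic_composition_symmetric.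
Qed.
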